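(* $N\otimes-$ is a functor on $\mathsf{SquaMS}$: for every square metric space $X$, the quotient distance on $N\otimes X$ is a metric, $(N\otimes X,S_{N\otimes X})$ is a square metric space, and for every morphism $f$ of $\mathsf{SquaMS}$, $N\otimes f$ is a morphism of $\mathsf{SquaMS}$, with identities and composition preserved.
   Context: Let $M_0=\{(r,s)\in[0,1]^2: r\in\{0,1\}\text{ or } s\in\{0,1\}\}$. A square metric space is a pair $(X,S_X)$ with $X$ a metric space with all distances at most $2$ and $S_X\colon M_0\to X$ injective such that (sq1) for $i\in\{0,1\}$, $r,s\in[0,1]$: $d_X(S_X(i,r),S_X(i,s))=|s-r|$ and $d_X(S_X(r,i),S_X(s,i))=|s-r|$; (sq2) $d_X(S_X(r,s),S_X(t,u))\ge|r-t|+|s-u|$. $\mathsf{SquaMS}$: these objects, with short maps $f$ satisfying $f\circ S_X=S_Y$ as morphisms. Let $N=\{0,1,2\}^2$, also viewed as points of $\mathbb{R}^2$. For $X$ in $\mathsf{SquaMS}$, $N\otimes X=(N\times X)/\!\sim$, where $\sim$ is the equivalence relation generated by $(m,S_X(p))\sim(n,S_X(q))$ whenever $m,n\in N$ differ by exactly $1$ in exactly one coordinate and $(m+p)/3=(n+q)/3$ in $\mathbb{R}^2$; $n\otimes x$ is the class of $(n,x)$. On $N\times X$ put $d((a,u),(b,v))=\frac13 d_X(u,v)$ if $a=b$ and $2$ otherwise; the quotient distance is the infimum over finite sequences from $(m,x)$ to $(n,y)$ in $N\times X$ of the sum over consecutive pairs of $0$ if $\sim$-related and the distance otherwise. $S_{N\otimes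 X}(p)=n\otimes S_X(3p-n)$ for any $n\in N$ with $p\in(n+[0,1]^2)/3$, and $(N\otimes f)(n\otimes x)=n\otimes f(x)$. *)

From Stdlib Require Import Reals Lra List Relations.
From Stdlib Require Import ClassicalEpsilon.
From Coquelicot Require Import Coquelicot.
Open Scope R_scope.

Definition M0 (p : R * R) : Prop :=
  0 <= fst p <= 1 /\ 0 <= snd p <= 1 /\
  (fst p = 0 \/ fst p = 1 \/ snd p = 0 \/ snd p = 1).

(* ---------- metric and square-metric structure on a type T modulo an
   equivalence E (E = eq for genuine types, E = ~ for the quotient) ---------- *)
Definition is_metric_on {T : Type} (E : T -> T -> Prop) (d : T -> T -> R) : Prop :=
  (forall a a' b b', E a a' -> E b b' -> d a b = d a' b') /\
  (forall a b, 0 <= d a b) /\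
  (forall a b, d a b = 0 <-> E a b) /\
  (forall a b, d a b = d b a) /\
  (forall a b c, d a c <= d a b + d b c).

(* S : M0 -> T is modelled as a total function R*R -> T of which only the
   values on M0 matter. *)
Definition is_square_metric {T : Type} (E : T -> T -> Prop) (d : T -> T -> R)
    (S : R * R -> T) : Prop :=
  is_metric_on E d /\
  (forall a b, d a b <= 2) /\
  (forall p q, M0 p -> M0 q -> E (S p) (S q) -> p = q) /\
  (forall i r s, (i = 0 \/ i = 1) -> 0 <= r <= 1 -> 0 <= s <= 1 ->
     d (S (i, r)) (S (i, s)) = Rabs (s - r) /\
     d (S (r, i)) (S (s, i)) = Rabs (s - r)) /\
  (forall r s t u, M0 (r, s) -> M0 (t, u) ->
     d (S (r, s)) (S (t, u)) >= Rabs (r - t) + Rabs (s - u)).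

Definition is_morphism_on {T U : Type} (ET : T -> T -> Prop) (EU : U -> U -> Prop)
    (dT : T -> T -> R) (dU : U -> U -> R) (ST : R * R -> T) (SU : R * R -> U)
    (f : T -> U) : Prop :=
  (forall a b, ET a b -> EU (f a) (f b)) /\
  (forall a b, dU (f a) (f b) <= dT a b) /\
  (forall p, M0 p -> EU (f (ST p)) (SU p)).

Record SqMS := {
  car :> Type;
  dist : car -> car -> R;
  sqS : R * R -> car;
  sq_ok : is_square_metric (@eq car) dist sqS
}.

Definition is_morphism (X Y : SqMS) (f : car X -> car Y) : Prop :=
  is_morphism_on (@eq (car X)) (@eq (car Y)) (dist X) (dist Y) (sqS X) (sqS Y) f.

Inductive three : Type := t0 | t1 | t2.
Definition vt (t : three) : R := match t with t0 => 0 | t1 => 1 | t2 => 2 end.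
Definition NN : Type := (three * three)%type.
Definition vN1 (n : NN) : R := vt (fst n).
Definition vN2 (n : NN) : R := vt (snd n).

Definition N_eq_dec (m n : NN) : {m = n} + {m <> n}.
Proof. decide equality; decide equality. Defined.

Definition adjN (m n : NN) : Prop :=
  (fst m = fst n /\ Rabs (vN2 m - vN2 n) = 1) \/
  (snd m = snd n /\ Rabs (vN1 m - vN1 n) = 1).

Definition in_cell (n : NN) (p : R * R) : Prop :=
  vN1 n / 3 <= fst p <= (vN1 n + 1) / 3 /\ vN2 n / 3 <= snd p <= (vN2 n + 1) / 3.

Definition rescale (n : NN) (p : R * R) : R * R :=
  (3 * fst p - vN1 n, 3 * snd p - vN2 n).

Section Tensor.
Variable X : SqMS.

Definition TP : Type := (NN * car X)%type.

Definition tgen (a b : TP) : Prop :=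
  exists m n p q, M0 p /\ M0 q /\ adjN m n /\
    a = (m, sqS X p) /\ b = (n, sqS X q) /\
    (vN1 m + fst p) / 3 = (vN1 n + fst q) / 3 /\
    (vN2 m + snd p) / 3 = (vN2 n + snd q) / 3.

Definition trel : TP -> TP -> Prop := clos_refl_sym_trans TP tgen.

Definition base_d (a b : TP) : R :=
  if N_eq_dec (fst a) (fst b) then dist X (snd a) (snd b) / 3 else 2.

Definition step_cost (a b : TP) : R :=
  if excluded_middle_informative (trel a b) then 0 else base_d a b.

Fixpoint chain_cost (a : TP) (l : list TP) : R :=
  match l with
  | nil => 0
  | x :: l' => step_cost a x + chain_cost x l'
  end.

Definition tdist (a b : TP) : R :=
  real (Glb_Rbar (fun r => exists l, last l a = b /\ r = chain_cost a l)).

Definition cell3 (r : R) : three :=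
  if Rle_dec r (1/3) then t0 else if Rle_dec r (2/3) then t1 else t2.
Definition cellN (p : R * R) : NN := (cell3 (fst p), cell3 (snd p)).

Definition tS (p : R * R) : TP := (cellN p, sqS X (rescale (cellN p) p)).

End Tensor.

Definition tmap {X Y : SqMS} (f : car X -> car Y) (a : TP X) : TP Y :=
  (fst a, f (snd a)).

From Stdlib Require Import Reals Lra List Relations Classical.
From Stdlib Require Import ClassicalEpsilon.
From Coquelicot Require Import Coquelicot.
From Pilot Require Import Defs.
Open Scope R_scope.

(** Place the nine copies of [X] on the nine cells of the square [[0,1]^2],
    the boundary point [S p] of copy [n] sitting at [pos n p = (n + p)/3];
    [~] identifies exactly the boundary points sitting at the same place.
    A chain of cost [< 2] never pays for a jump between copies, so it either
    stays in one copy, or leaves its first copy at some [S p] and enters its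
    last copy at some [S q]; in between, by (sq2), every move inside a copy
    between boundary points costs at least the [l1]-displacement of their
    places.  This yields (sq2) for [N ⊗ X] and, since a point of [X] off the
    compact image of the boundary is at positive distance from it, the
    separation of the quotient distance.  The upper bound in (sq1) holds on
    each third of an edge by (sq1) in the corresponding copy, and the thirds
    are concatenated with the triangle inequality. *)

(** * Planar geometry of the nine cells *)

Definition l1 (u v : R * R) : R := Rabs (fst u - fst v) + Rabs (snd u - snd v).

Lemma l1_ge0 u v : 0 <= l1 u v.
Proof.
  unfold l1. pose proof (Rabs_pos (fst u - fst v)). pose proof (Rabs_pos (snd u - snd v)). lra.
Qed.

Lemma l1_triangle u v w : l1 u w <= l1 u v + l1 v w.
Proof.
  unfold l1.
  pose proof (Rabs_triang (fst u - fst v) (fst v - fst w)).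
  pose proof (Rabs_triang (snd u - snd v) (snd v - snd w)).
  replace (fst u - fst w) with (fst u - fst v + (fst v - fst w)) by ring.
  replace (snd u - snd w) with (snd u - snd v + (snd v - snd w)) by ring.
  lra.
Qed.

Lemma l1_eq0 u v : l1 u v = 0 -> u = v.
Proof.
  unfold l1. intros H.
  pose proof (Rabs_pos (fst u - fst v)). pose proof (Rabs_pos (snd u - snd v)).
  assert (E1 : Rabs (fst u - fst v) = 0) by lra.
  assert (E2 : Rabs (snd u - snd v) = 0) by lra.
  apply Rabs_eq_0, Rminus_diag_uniq in E1. apply Rabs_eq_0, Rminus_diag_uniq in E2.
  destruct u, v; simpl in *; congruence.
Qed.

Definition pos (n : NN) (p : R * R) : R * R := ((vN1 n + fst p) / 3, (vN2 n + snd p) / 3).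

Lemma pos_eq m p n q :
  pos m p = pos n q -> vN1 m + fst p = vN1 n + fst q /\ vN2 m + snd p = vN2 n + snd q.
Proof. unfold pos. intros E. injection E as E1 E2. split; lra. Qed.

Lemma pos_rescale n p : pos n (rescale n p) = p.
Proof. destruct p as [a b]. unfold pos, rescale; simpl. f_equal; field. Qed.

Lemma l1_pos n p q : l1 (pos n p) (pos n q) = l1 p q / 3.
Proof.
  unfold l1, pos; simpl.
  replace ((vN1 n + fst p) / 3 - (vN1 n + fst q) / 3) with ((fst p - fst q) / 3) by field.
  replace ((vN2 n + snd p) / 3 - (vN2 n + snd q) / 3) with ((snd p - snd q) / 3) by field.
  rewrite !Rabs_div, (Rabs_pos_eq 3) by lra. field.
Qed.

Lemma vt_range t : 0 <= vt t <= 2.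
Proof. destruct t; simpl; lra. Qed.

Lemma M0_unit p : M0 p -> 0 <= fst p <= 1 /\ 0 <= snd p <= 1.
Proof. unfold M0; tauto. Qed.

Lemma l1_pos_le2 m p n q : M0 p -> M0 q -> l1 (pos m p) (pos n q) <= 2.
Proof.
  intros Hp Hq. apply M0_unit in Hp. apply M0_unit in Hq.
  pose proof (vt_range (fst m)). pose proof (vt_range (snd m)).
  pose proof (vt_range (fst n)). pose proof (vt_range (snd n)).
  assert (Hunit : forall x y, 0 <= x <= 1 -> 0 <= y <= 1 -> Rabs (x - y) <= 1)
    by (intros; apply Rabs_le; lra).
  unfold l1, pos, vN1, vN2; simpl.
  pose proof (Hunit ((vt (fst m) + fst p) / 3) ((vt (fst n) + fst q) / 3)).
  pose proof (Hunit ((vt (snd m) + snd p) / 3) ((vt (snd n) + snd q) / 3)).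
  lra.
Qed.

Lemma vt_overlap t t' x y : t <> t' -> 0 <= x <= 1 -> 0 <= y <= 1 ->
  vt t + x = vt t' + y -> Rabs (vt t - vt t') = 1 /\ (y = 0 \/ y = 1).
Proof.
  destruct t, t'; simpl; intros; try congruence; unfold Rabs; destruct Rcase_abs; lra.
Qed.

Lemma M0_edges p : M0 p <->
  ((exists t, 0 <= t <= 1 /\ p = (0, t)) \/ (exists t, 0 <= t <= 1 /\ p = (1, t))) \/
  ((exists t, 0 <= t <= 1 /\ p = (t, 0)) \/ (exists t, 0 <= t <= 1 /\ p = (t, 1))).
Proof.
  destruct p as [a b]. unfold M0; simpl. split.
  - intros (Ha & Hb & [-> | [-> | [-> | ->]]]); eauto 6.
  - intros [[[t [Ht E]] | [t [Ht E]]] | [[t [Ht E]] | [t [Ht E]]]];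
      injection E as -> ->; lra.
Qed.

Lemma rescale_M0 n p : M0 p -> in_cell n p -> M0 (rescale n p).
Proof.
  destruct p as [a b]. unfold M0, in_cell, rescale, vN1, vN2; simpl.
  pose proof (vt_range (fst n)). pose proof (vt_range (snd n)). lra.
Qed.

Lemma cellN_in_cell p : 0 <= fst p <= 1 -> 0 <= snd p <= 1 -> in_cell (cellN p) p.
Proof.
  intros. unfold in_cell, cellN, cell3, vN1, vN2; simpl.
  split; repeat destruct Rle_dec; simpl; lra.
Qed.

Lemma rescale_cellN_M0 p : M0 p -> M0 (rescale (cellN p) p).
Proof.
  intros Hp. apply rescale_M0; [exact Hp|].
  destruct (M0_unit p Hp). now apply cellN_in_cell.
Qed.

Definition clamp01 (r : R) : R := Rmax 0 (Rmin 1 r).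

Lemma clamp01_range r : 0 <= clamp01 r <= 1.
Proof. unfold clamp01, Rmax, Rmin. repeat destruct Rle_dec; lra. Qed.

Lemma clamp01_id r : 0 <= r <= 1 -> clamp01 r = r.
Proof. intros. unfold clamp01, Rmax, Rmin. repeat destruct Rle_dec; lra. Qed.

Lemma clamp01_lip r s : Rabs (clamp01 r - clamp01 s) <= Rabs (r - s).
Proof.
  unfold clamp01, Rmax, Rmin, Rabs. repeat destruct Rle_dec; repeat destruct Rcase_abs; lra.
Qed.

Lemma lipschitz_attains_min (f : R -> R) :
  (forall r s, 0 <= r <= 1 -> 0 <= s <= 1 -> Rabs (f r - f s) <= Rabs (r - s)) ->
  exists r0, 0 <= r0 <= 1 /\ forall r, 0 <= r <= 1 -> f r0 <= f r.
Proof.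
  intros Hf.
  set (g r := f (clamp01 r)).
  assert (Hg : forall c, continuity_pt g c).
  { intros c eps Heps. exists eps. split; [exact Heps|].
    intros x [_ Hx]. simpl in *. unfold R_dist in *.
    eapply Rle_lt_trans; [apply Hf; apply clamp01_range|].
    eapply Rle_lt_trans; [apply clamp01_lip|exact Hx]. }
  destruct (continuity_ab_min g 0 1) as [r0 [Hmin Hr0]]; [lra | intros; apply Hg |].
  exists r0. split; [exact Hr0|]. intros r Hr.
  specialize (Hmin r Hr). unfold g in Hmin. now rewrite !clamp01_id in Hmin.
Qed.

Section SquareMetric.
Variable X : SqMS.
Notation d := (Defs.dist X).
Notation S := (sqS X).

Lemma dist_ge0 a b : 0 <= d a b.
Proof. destruct (sq_ok X) as [[_ [H _]] _]. apply H. Qed.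

Lemma dist_sym a b : d a b = d b a.
Proof. destruct (sq_ok X) as [[_ [_ [_ [H _]]]] _]. apply H. Qed.

Lemma dist_triangle a b c : d a c <= d a b + d b c.
Proof. destruct (sq_ok X) as [[_ [_ [_ [_ H]]]] _]. apply H. Qed.

Lemma dist_refl a : d a a = 0.
Proof. destruct (sq_ok X) as [[_ [_ [H _]]] _]. now apply H. Qed.

Lemma dist_eq0 a b : d a b = 0 -> a = b.
Proof. destruct (sq_ok X) as [[_ [_ [H _]]] _]. apply H. Qed.

Lemma dist_le2 a b : d a b <= 2.
Proof. destruct (sq_ok X) as [_ [H _]]. apply H. Qed.

Lemma sqS_inj p q : M0 p -> M0 q -> S p = S q -> p = q.
Proof. destruct (sq_ok X) as [_ [_ [H _]]]. apply H. Qed.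

Lemma sqS_edge i r s : (i = 0 \/ i = 1) -> 0 <= r <= 1 -> 0 <= s <= 1 ->
  d (S (i, r)) (S (i, s)) = Rabs (s - r) /\ d (S (r, i)) (S (s, i)) = Rabs (s - r).
Proof. destruct (sq_ok X) as [_ [_ [_ [H _]]]]. apply H. Qed.

Lemma l1_le_dist_sqS p q : M0 p -> M0 q -> l1 p q <= d (S p) (S q).
Proof.
  destruct (sq_ok X) as [_ [_ [_ [_ H]]]]. destruct p, q. intros. apply Rge_le, H; auto.
Qed.

Lemma dist_reverse_triangle x u v : Rabs (d x u - d x v) <= d u v.
Proof.
  pose proof (dist_triangle x u v). pose proof (dist_triangle x v u).
  rewrite (dist_sym v u) in *. apply Rabs_le. lra.
Qed.

Definition attained_or_apart (A : R * R -> Prop) (x : car X) : Prop :=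
  (exists p, A p /\ x = S p) \/
  (exists del, 0 < del /\ forall p, A p -> del <= d x (S p)).

Lemma attained_or_apart_ext (A B : R * R -> Prop) x :
  (forall p, A p <-> B p) -> attained_or_apart A x -> attained_or_apart B x.
Proof.
  intros AB [[p [Hp E]] | [del [Hdel H]]].
  - left. exists p. split; [apply AB|]; assumption.
  - right. exists del. split; [exact Hdel|]. intros p Hp. apply H, AB, Hp.
Qed.

Lemma attained_or_apart_union (A B : R * R -> Prop) x :
  attained_or_apart A x -> attained_or_apart B x ->
  attained_or_apart (fun p => A p \/ B p) x.
Proof.
  intros [[p [Hp ->]] | [dA [HdA HA]]].
  { intros _. left. exists p. auto. }
  intros [[q [Hq ->]] | [dB [HdB HB]]].
  { left. exists q. auto. }
  right. exists (Rmin dA dB). split; [now apply Rmin_pos|].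
  intros p [Hp | Hp].
  - apply Rle_trans with dA; [apply Rmin_l | auto].
  - apply Rle_trans with dB; [apply Rmin_r | auto].
Qed.

Lemma attained_or_apart_segment (e : R -> R * R) x :
  (forall r s, 0 <= r <= 1 -> 0 <= s <= 1 -> d (S (e r)) (S (e s)) <= Rabs (r - s)) ->
  attained_or_apart (fun p => exists t, 0 <= t <= 1 /\ p = e t) x.
Proof.
  intros He.
  destruct (lipschitz_attains_min (fun t => d x (S (e t)))) as [t0 [Ht0 Hmin]].
  { intros r s Hr Hs. eapply Rle_trans; [apply dist_reverse_triangle | now apply He]. }
  destruct (Req_dec (d x (S (e t0))) 0) as [Z | Z].
  - left. exists (e t0). split; [eauto | now apply dist_eq0].
  - right. exists (d x (S (e t0))). split.
    + pose proof (dist_ge0 x (S (e t0))). lra.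
    + intros p [t [Ht ->]]. now apply Hmin.
Qed.

(* The boundary of the square is compact and [S] is 1-Lipschitz on each
   edge, so the distance from [x] to the image of [S] is attained. *)
Lemma attained_or_apart_M0 x : attained_or_apart M0 x.
Proof.
  assert (Hlip : forall i, i = 0 \/ i = 1 -> forall r s, 0 <= r <= 1 -> 0 <= s <= 1 ->
            d (S (i, r)) (S (i, s)) <= Rabs (r - s) /\
            d (S (r, i)) (S (s, i)) <= Rabs (r - s)).
  { intros i Hi r s Hr Hs. rewrite Rabs_minus_sym.
    destruct (sqS_edge i r s Hi Hr Hs) as [-> ->]. lra. }
  eapply attained_or_apart_ext; [intros p; symmetry; apply M0_edges|].
  repeat apply attained_or_apart_union; apply attained_or_apart_segment;
    intros r s Hr Hs.
  - apply (Hlip 0); auto.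
  - apply (Hlip 1); auto.
  - apply (Hlip 0); auto.
  - apply (Hlip 1); auto.
Qed.

End SquareMetric.

(** * The gluing relation *)

Section Gluing.
Variable X : SqMS.
Notation S := (sqS X).

Lemma trel_adjacent m n p q : M0 p -> M0 q -> adjN m n -> pos m p = pos n q ->
  trel X (m, S p) (n, S q).
Proof.
  intros Hp Hq Hmn E. apply rst_step. exists m, n, p, q.
  unfold pos in E. injection E as E1 E2. tauto.
Qed.

(* Diagonally adjacent cells meet at a corner, which also lies in the cell
   [(fst n, snd m)]. *)
Lemma trel_glue m n p q : M0 p -> M0 q -> pos m p = pos n q -> trel X (m, S p) (n, S q).
Proof.
  intros Hp Hq E.
  pose proof (M0_unit p Hp) as [Hp1 Hp2]. pose proof (M0_unit q Hq) as [Hq1 Hq2].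
  pose proof (pos_eq _ _ _ _ E) as [E1 E2].
  destruct m as [m1 m2], n as [n1 n2]. unfold vN1, vN2 in E1, E2; simpl in E1, E2.
  destruct (classic (m1 = n1)) as [<- | N1], (classic (m2 = n2)) as [<- | N2].
  - replace q with p by (destruct p, q; simpl in *; f_equal; lra). apply rst_refl.
  - apply trel_adjacent; auto. left. split; [reflexivity|].
    now apply (vt_overlap _ _ (snd p) (snd q)).
  - apply trel_adjacent; auto. right. split; [reflexivity|].
    now apply (vt_overlap _ _ (fst p) (fst q)).
  - destruct (vt_overlap _ _ _ _ N1 Hp1 Hq1 E1) as [A1 Hq0].
    destruct (vt_overlap _ _ _ _ N2 Hp2 Hq2 E2) as [A2 _].
    assert (Hc : M0 (fst q, snd p)) by (unfold M0; simpl; lra).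
    apply rst_trans with ((n1, m2), S (fst q, snd p)).
    + apply trel_adjacent; auto.
      * right. split; [reflexivity | exact A1].
      * unfold pos, vN1, vN2; simpl. f_equal; lra.
    + apply trel_adjacent; auto.
      * left. split; [reflexivity | exact A2].
      * unfold pos, vN1, vN2; simpl. f_equal; lra.
Qed.

Definition glued (a b : TP X) : Prop :=
  exists m n p q, M0 p /\ M0 q /\ a = (m, S p) /\ b = (n, S q) /\ pos m p = pos n q.

Lemma trel_glued a b : trel X a b -> a = b \/ glued a b.
Proof.
  induction 1 as [a b H | a | a b _ IH | a b c _ IH1 _ IH2].
  - right. destruct H as (m & n & p & q & Hp & Hq & _ & -> & -> & E1 & E2).
    exists m, n, p, q. unfold pos. rewrite E1, E2. auto.
  - now left.
  - destruct IH as [-> | (m & n & p & q & Hp & Hq & -> & -> & E)]; [now left|].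
    right. exists n, m, q, p. auto.
  - destruct IH1 as [-> | (m & n & p & q & Hp & Hq & -> & -> & E)]; [exact IH2|].
    destruct IH2 as [<- | (n' & k & p' & r & Hp' & Hr & E' & -> & E2)].
    + right. exists m, n, p, q. auto.
    + injection E' as <- Es. apply sqS_inj in Es; auto. subst p'.
      right. exists m, k, p, r. do 4 (split; [auto|]). congruence.
Qed.

Lemma trel_pos m n p q : M0 p -> M0 q -> trel X (m, S p) (n, S q) -> pos m p = pos n q.
Proof.
  intros Hp Hq H. destruct (trel_glued _ _ H) as [E | (m' & n' & p' & q' & Hp' & Hq' & E1 & E2 & E)].
  - injection E as <- Es. apply sqS_inj in Es; congruence.
  - injection E1 as <- Es1. injection E2 as <- Es2.
    apply sqS_inj in Es1; auto. apply sqS_inj in Es2; auto. congruence.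
Qed.

End Gluing.

(** * The quotient distance is a pseudometric *)

Lemma last_cons {A} (x : A) l a : last (x :: l) a = last l x.
Proof.
  induction l as [|y l IH] in x, a |- *; [reflexivity|].
  change (last (x :: y :: l) a) with (last (y :: l) a). now rewrite !IH.
Qed.

Lemma last_app {A} (l1 l2 : list A) a : last (l1 ++ l2) a = last l2 (last l1 a).
Proof.
  induction l1 as [|x l1 IH] in a |- *; [reflexivity|].
  rewrite <- app_comm_cons, !last_cons. apply IH.
Qed.

Lemma last_map {A B} (f : A -> B) l a : last (map f l) (f a) = f (last l a).
Proof.
  induction l as [|x l IH] in a |- *; [reflexivity|].
  simpl map. rewrite !last_cons. apply IH.
Qed.

Section QuotientDistance.
Variable X : SqMS.

Lemma base_d_ge0 a b : 0 <= base_d X a b.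
Proof.
  unfold base_d. destruct N_eq_dec; [|lra].
  pose proof (dist_ge0 X (snd a) (snd b)). lra.
Qed.

Lemma base_d_le2 a b : base_d X a b <= 2.
Proof.
  unfold base_d. destruct N_eq_dec; [|lra].
  pose proof (dist_le2 X (snd a) (snd b)). lra.
Qed.

Lemma step_cost_ge0 a b : 0 <= step_cost X a b.
Proof. unfold step_cost. destruct excluded_middle_informative; [lra | apply base_d_ge0]. Qed.

Lemma step_cost_le_base a b : step_cost X a b <= base_d X a b.
Proof. unfold step_cost. destruct excluded_middle_informative; [apply base_d_ge0 | lra]. Qed.

Lemma step_cost_trel a b : trel X a b -> step_cost X a b = 0.
Proof. unfold step_cost. destruct excluded_middle_informative; tauto. Qed.

Lemma step_cost_sym a b : step_cost X a b = step_cost X b a.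
Proof.
  unfold step_cost.
  destruct (excluded_middle_informative (trel X a b)) as [H | H],
    (excluded_middle_informative (trel X b a)) as [H' | H']; auto.
  - now elim H'; apply rst_sym.
  - now elim H; apply rst_sym.
  - unfold base_d.
    destruct (N_eq_dec (fst a) (fst b)), (N_eq_dec (fst b) (fst a)); try congruence.
    now rewrite dist_sym.
Qed.

Lemma chain_cost_ge0 a l : 0 <= chain_cost X a l.
Proof.
  induction l as [|x l IH] in a |- *; simpl; [lra|].
  pose proof (step_cost_ge0 a x). pose proof (IH x). lra.
Qed.

Lemma chain_cost_app a l1 l2 :
  chain_cost X a (l1 ++ l2) = chain_cost X a l1 + chain_cost X (last l1 a) l2.
Proof.
  induction l1 as [|x l1 IH] in a |- *; [simpl; lra|].
  cbn [chain_cost app]. rewrite IH, last_cons. lra.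
Qed.

Lemma chain_cost_rev a l : exists l',
  last l' (last l a) = a /\ chain_cost X (last l a) l' = chain_cost X a l.
Proof.
  induction l as [|x l IH] in a |- *; [now exists nil|].
  destruct (IH x) as [l' [E C]]. rewrite last_cons. exists (l' ++ a :: nil). split.
  - now rewrite last_app.
  - rewrite chain_cost_app, E, C. simpl. rewrite step_cost_sym. lra.
Qed.

Definition chain_costs (a b : TP X) (r : R) : Prop :=
  exists l, last l a = b /\ r = chain_cost X a l.

Lemma tdist_glb a b : is_glb_Rbar (chain_costs a b) (tdist X a b).
Proof.
  pose proof (Glb_Rbar_correct (chain_costs a b)) as Hglb.
  assert (Hlow : Rbar_le 0 (Glb_Rbar (chain_costs a b))).
  { apply Hglb. intros r [l [_ ->]]. apply chain_cost_ge0. }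
  assert (Hup : Rbar_le (Glb_Rbar (chain_costs a b)) (chain_cost X a (b :: nil))).
  { apply Hglb. now exists (b :: nil). }
  change (tdist X a b) with (real (Glb_Rbar (chain_costs a b))).
  destruct (Glb_Rbar (chain_costs a b)); easy.
Qed.

Lemma tdist_le_chain a l : tdist X a (last l a) <= chain_cost X a l.
Proof. apply (proj1 (tdist_glb a (last l a))). now exists l. Qed.

Lemma tdist_ge a b K :
  (forall l, last l a = b -> K <= chain_cost X a l) -> K <= tdist X a b.
Proof.
  intros H. apply (proj2 (tdist_glb a b) K). intros r [l [E ->]]. now apply H.
Qed.

Lemma tdist_ge0 a b : 0 <= tdist X a b.
Proof. apply tdist_ge. intros. apply chain_cost_ge0. Qed.

Lemma tdist_le_base a b : tdist X a b <= base_d X a b.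
Proof.
  pose proof (tdist_le_chain a (b :: nil)). pose proof (step_cost_le_base a b).
  simpl in *. lra.
Qed.

Lemma tdist_le2 a b : tdist X a b <= 2.
Proof. eapply Rle_trans; [apply tdist_le_base | apply base_d_le2]. Qed.

Lemma tdist_trel a b : trel X a b -> tdist X a b = 0.
Proof.
  intros H. apply Rle_antisym; [|apply tdist_ge0].
  pose proof (tdist_le_chain a (b :: nil)). simpl in *. rewrite step_cost_trel in *; auto. lra.
Qed.

Lemma tdist_triangle a b c : tdist X a c <= tdist X a b + tdist X b c.
Proof.
  enough (tdist X a c - tdist X b c <= tdist X a b) by lra.
  apply tdist_ge. intros l1 E1.
  enough (tdist X a c - chain_cost X a l1 <= tdist X b c) by lra.
  apply tdist_ge. intros l2 E2.
  pose proof (tdist_le_chain a (l1 ++ l2)) as H.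
  rewrite last_app, chain_cost_app, E1, E2 in H. lra.
Qed.

Lemma tdist_sym a b : tdist X a b = tdist X b a.
Proof.
  enough (Hle : forall a b, tdist X b a <= tdist X a b) by (apply Rle_antisym; apply Hle).
  clear a b. intros a b. apply tdist_ge. intros l E.
  destruct (chain_cost_rev a l) as [l' [E' C]]. rewrite E in E', C.
  rewrite <- C, <- E' at 1. apply tdist_le_chain.
Qed.

Lemma tdist_trel_l a a' b : trel X a a' -> tdist X a b = tdist X a' b.
Proof.
  intros H.
  pose proof (tdist_trel a a' H). pose proof (tdist_trel a' a (rst_sym _ _ _ _ H)).
  pose proof (tdist_triangle a a' b). pose proof (tdist_triangle a' a b). lra.
Qed.

Lemma tdist_compat a a' b b' : trel X a a' -> trel X b b' -> tdist X a b = tdist X a' b'.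
Proof.
  intros Ha Hb. rewrite (tdist_trel_l a a' b Ha), tdist_sym, (tdist_trel_l b b' a' Hb).
  apply tdist_sym.
Qed.

End QuotientDistance.

(** * Lower bounds for the quotient distance *)

Section LowerBound.
Variable X : SqMS.
Notation d := (Defs.dist X).
Notation S := (sqS X).

(* What a chain from [a] to [b] of cost [< 2] must pay, at least: either it
   stays in one copy, or it leaves through [S p] and arrives through [S q]. *)
Definition cost_bound (a b : TP X) (c : R) : Prop :=
  (fst a = fst b /\ d (snd a) (snd b) / 3 <= c) \/
  (exists p q, M0 p /\ M0 q /\
     d (snd a) (S p) / 3 + l1 (pos (fst a) p) (pos (fst b) q) + d (S q) (snd b) / 3 <= c).

Lemma cost_bound_refl a : cost_bound a a 0.
Proof. left. split; [reflexivity|]. rewrite dist_refl. lra. Qed.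

Lemma cost_bound_glued a a' b c : glued X a a' -> cost_bound a' b c -> cost_bound a b c.
Proof.
  intros (m & n & p0 & q0 & Hp0 & Hq0 & -> & -> & E) [[En Ed] | (p & q & Hp & Hq & Hc)];
    simpl in *; right.
  - exists p0, q0. split; [exact Hp0|]. split; [exact Hq0|].
    subst n. simpl. rewrite E, l1_pos, dist_refl.
    replace (l1 q0 q0) with 0 by (unfold l1; rewrite !Rminus_diag, Rabs_R0; lra). lra.
  - exists p0, q. split; [exact Hp0|]. split; [exact Hq|]. simpl. rewrite E, dist_refl.
    pose proof (l1_triangle (pos n q0) (pos n p) (pos (fst b) q)).
    pose proof (l1_le_dist_sqS X q0 p Hq0 Hp). rewrite l1_pos in *. lra.
Qed.

Lemma cost_bound_move m x x' b c :
  cost_bound (m, x') b c -> cost_bound (m, x) b (d x x' / 3 + c).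
Proof.
  intros [[En Ed] | (p & q & Hp & Hq & Hc)]; simpl in *.
  - left. simpl. split; [exact En|]. pose proof (dist_triangle X x x' (snd b)). lra.
  - right. exists p, q. split; [exact Hp|]. split; [exact Hq|].
    simpl. pose proof (dist_triangle X x x' (S p)). lra.
Qed.

Lemma chain_cost_bound a l : chain_cost X a l < 2 -> cost_bound a (last l a) (chain_cost X a l).
Proof.
  induction l as [|x l IH] in a |- *; intros Hc; [apply cost_bound_refl|].
  cbn [chain_cost] in Hc |- *. rewrite last_cons.
  pose proof (step_cost_ge0 X a x).
  specialize (IH x ltac:(lra)).
  unfold step_cost in *. destruct excluded_middle_informative as [Ht | Ht].
  - rewrite Rplus_0_l. destruct (trel_glued X a x Ht) as [<- | Hg]; [exact IH|].
    exact (cost_bound_glued _ _ _ _ Hg IH).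
  - pose proof (chain_cost_ge0 X x l).
    destruct a as [m y], x as [m' y']. unfold base_d in *; simpl in *.
    destruct (N_eq_dec m m') as [<- | Em]; [now apply cost_bound_move | lra].
Qed.

Lemma tdist_ge_cost_bound a b K :
  K <= 2 -> (forall c, cost_bound a b c -> K <= c) -> K <= tdist X a b.
Proof.
  intros HK H. apply tdist_ge. intros l E.
  destruct (Rlt_le_dec (chain_cost X a l) 2) as [Hl | Hl]; [|lra].
  apply H. rewrite <- E. now apply chain_cost_bound.
Qed.

Lemma l1_pos_le_tdist m n p q : M0 p -> M0 q ->
  l1 (pos m p) (pos n q) <= tdist X (m, S p) (n, S q).
Proof.
  intros Hp Hq. apply tdist_ge_cost_bound; [now apply l1_pos_le2|].
  intros c [[Emn Ed] | (p' & q' & Hp' & Hq' & Hc)]; simpl in *.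
  - subst n. rewrite l1_pos. pose proof (l1_le_dist_sqS X p q Hp Hq). lra.
  - pose proof (l1_triangle (pos m p) (pos m p') (pos n q)).
    pose proof (l1_triangle (pos m p') (pos n q') (pos n q)).
    pose proof (l1_le_dist_sqS X p p' Hp Hp').
    pose proof (l1_le_dist_sqS X q' q Hq' Hq).
    rewrite !l1_pos in *. lra.
Qed.

Lemma tdist_pos_of_apart m x b del : ~ trel X (m, x) b -> 0 < del ->
  (forall p, M0 p -> del <= d x (S p)) -> 0 < tdist X (m, x) b.
Proof.
  destruct b as [n y]. intros Hn Hdel Hx.
  set (e := if N_eq_dec m n then d x y / 3 else 1).
  assert (He : 0 < e).
  { unfold e. destruct N_eq_dec as [<- | _]; [|lra].
    assert (x <> y) by (intros ->; apply Hn, rst_refl).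
    pose proof (dist_ge0 X x y).
    destruct (Req_dec (d x y) 0) as [Z | Z]; [now apply dist_eq0 in Z | lra]. }
  set (K := Rmin 2 (Rmin (del / 3) e)).
  assert (HKdel : K <= del / 3) by (eapply Rle_trans; [apply Rmin_r | apply Rmin_l]).
  assert (HKe : K <= e) by (eapply Rle_trans; [apply Rmin_r | apply Rmin_r]).
  apply Rlt_le_trans with K; [unfold K; repeat apply Rmin_pos; lra|].
  apply tdist_ge_cost_bound; [apply Rmin_l|].
  intros c [[Emn Ec] | (p & q & Hp & Hq & Hc)]; simpl in *.
  - subst n. unfold e in HKe. destruct N_eq_dec; [lra | easy].
  - pose proof (Hx p Hp). pose proof (l1_ge0 (pos m p) (pos n q)).
    pose proof (dist_ge0 X (S q) y). lra.
Qed.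

Lemma tdist_eq0 a b : tdist X a b = 0 -> trel X a b.
Proof.
  intros Hz. apply NNPP. intros Hn. destruct a as [m x], b as [n y].
  destruct (attained_or_apart_M0 X x) as [[p [Hp ->]] | [dx [Hdx Hx]]].
  2: { pose proof (tdist_pos_of_apart m x (n, y) dx Hn Hdx Hx). lra. }
  destruct (attained_or_apart_M0 X y) as [[q [Hq ->]] | [dy [Hdy Hy]]].
  - apply Hn, trel_glue; auto. apply l1_eq0.
    pose proof (l1_pos_le_tdist m n p q Hp Hq). pose proof (l1_ge0 (pos m p) (pos n q)). lra.
  - assert (Hn' : ~ trel X (n, y) (m, S p)) by (intros H; apply Hn, rst_sym, H).
    pose proof (tdist_pos_of_apart n y (m, S p) dy Hn' Hdy Hy).
    rewrite tdist_sym in Hz. lra.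
Qed.

End LowerBound.

(** * The square structure of [N ⊗ X] *)

Section TensorSquare.
Variable X : SqMS.
Notation d := (Defs.dist X).
Notation S := (sqS X).

Lemma tS_cell_indep p n : M0 p -> in_cell n p -> trel X (tS X p) (n, S (rescale n p)).
Proof.
  intros Hp Hn. apply trel_glue.
  - now apply rescale_cellN_M0.
  - now apply rescale_M0.
  - now rewrite !pos_rescale.
Qed.

Lemma l1_le_tdist_tS p q : M0 p -> M0 q -> l1 p q <= tdist X (tS X p) (tS X q).
Proof.
  intros Hp Hq. unfold tS.
  rewrite <- (pos_rescale (cellN p) p) at 1. rewrite <- (pos_rescale (cellN q) q) at 1.
  apply l1_pos_le_tdist; now apply rescale_cellN_M0.
Qed.

Lemma tS_inj p q : M0 p -> M0 q -> trel X (tS X p) (tS X q) -> p = q.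
Proof.
  intros Hp Hq H. apply trel_pos in H; try now apply rescale_cellN_M0.
  now rewrite !pos_rescale in H.
Qed.

Lemma tdist_tS_le_cell n p q : M0 p -> M0 q -> in_cell n p -> in_cell n q ->
  tdist X (tS X p) (tS X q) <= d (S (rescale n p)) (S (rescale n q)) / 3.
Proof.
  intros Hp Hq Hnp Hnq.
  rewrite (tdist_compat X _ _ _ _ (tS_cell_indep p n Hp Hnp) (tS_cell_indep q n Hq Hnq)).
  eapply Rle_trans; [apply tdist_le_base|]. unfold base_d; simpl.
  destruct N_eq_dec; [lra | congruence].
Qed.

Lemma edge_cell i : i = 0 \/ i = 1 ->
  exists c, vt c / 3 <= i <= (vt c + 1) / 3 /\ (3 * i - vt c = 0 \/ 3 * i - vt c = 1).
Proof. intros [-> | ->]; [exists t0 | exists t2]; simpl; lra. Qed.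

Lemma tdist_tS_edge_third i k r s : (i = 0 \/ i = 1) ->
  vt k / 3 <= r <= s -> s <= (vt k + 1) / 3 ->
  tdist X (tS X (i, r)) (tS X (i, s)) <= s - r /\
  tdist X (tS X (r, i)) (tS X (s, i)) <= s - r.
Proof.
  intros Hi Hr Hs. pose proof (vt_range k).
  destruct (edge_cell i Hi) as [c [Hc Hc01]].
  destruct (sqS_edge X (3 * i - vt c) (3 * r - vt k) (3 * s - vt k)) as [E1 E2];
    [exact Hc01 | lra | lra |].
  rewrite Rabs_right in E1, E2 by lra.
  assert (M0 (i, r) /\ M0 (i, s) /\ M0 (r, i) /\ M0 (s, i)) as (H1 & H2 & H3 & H4)
    by (unfold M0; simpl; lra).
  split.
  - eapply Rle_trans; [apply (tdist_tS_le_cell (c, k)); auto|];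
      unfold in_cell, rescale, vN1, vN2 in *; simpl in *; lra.
  - eapply Rle_trans; [apply (tdist_tS_le_cell (k, c)); auto|];
      unfold in_cell, rescale, vN1, vN2 in *; simpl in *; lra.
Qed.

Lemma length_bound_concat (g : R -> R -> R) a c b :
  (forall r s t, g r t <= g r s + g s t) ->
  (forall r s, a <= r <= s -> s <= c -> g r s <= s - r) ->
  (forall r s, c <= r <= s -> s <= b -> g r s <= s - r) ->
  forall r s, a <= r <= s -> s <= b -> g r s <= s - r.
Proof.
  intros Htri H1 H2 r s Hr Hs.
  destruct (Rle_dec s c); [apply H1; lra|].
  destruct (Rle_dec c r); [apply H2; lra|].
  pose proof (Htri r c s). pose proof (H1 r c ltac:(lra) ltac:(lra)).
  pose proof (H2 c s ltac:(lra) ltac:(lra)). lra.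
Qed.

Lemma tdist_tS_le_of_thirds (e : R -> R * R) :
  (forall k r s, vt k / 3 <= r <= s -> s <= (vt k + 1) / 3 ->
     tdist X (tS X (e r)) (tS X (e s)) <= s - r) ->
  forall r s, 0 <= r <= 1 -> 0 <= s <= 1 ->
    tdist X (tS X (e r)) (tS X (e s)) <= Rabs (s - r).
Proof.
  intros Hthird.
  set (g r s := tdist X (tS X (e r)) (tS X (e s))).
  assert (Htri : forall r s t, g r t <= g r s + g s t) by (intros; apply tdist_triangle).
  assert (Hle : forall r s, 0 <= r <= s -> s <= 1 -> g r s <= s - r).
  { apply (length_bound_concat g 0 (2 / 3) 1 Htri).
    - apply (length_bound_concat g 0 (1 / 3) (2 / 3) Htri);
        intros; [apply (Hthird t0) | apply (Hthird t1)]; simpl; lra.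
    - intros; apply (Hthird t2); simpl; lra. }
  intros r s Hr Hs. destruct (Rle_dec r s).
  - rewrite Rabs_right by lra. apply Hle; lra.
  - rewrite Rabs_left, Ropp_minus_distr by lra. rewrite tdist_sym. apply Hle; lra.
Qed.

Lemma tdist_tS_edge i r s : (i = 0 \/ i = 1) -> 0 <= r <= 1 -> 0 <= s <= 1 ->
  tdist X (tS X (i, r)) (tS X (i, s)) = Rabs (s - r) /\
  tdist X (tS X (r, i)) (tS X (s, i)) = Rabs (s - r).
Proof.
  intros Hi Hr Hs.
  assert (M0 (i, r) /\ M0 (i, s) /\ M0 (r, i) /\ M0 (s, i)) as (H1 & H2 & H3 & H4)
    by (unfold M0; simpl; lra).
  pose proof (l1_le_tdist_tS _ _ H1 H2) as L1. pose proof (l1_le_tdist_tS _ _ H3 H4) as L2.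
  unfold l1 in L1, L2; simpl in L1, L2.
  rewrite Rminus_diag, Rabs_R0, Rabs_minus_sym in L1, L2.
  split; apply Rle_antisym; try lra.
  - apply (tdist_tS_le_of_thirds (fun t => (i, t))); auto.
    intros k r' s' Hr' Hs'. now apply (tdist_tS_edge_third i k).
  - apply (tdist_tS_le_of_thirds (fun t => (t, i))); auto.
    intros k r' s' Hr' Hs'. now apply (tdist_tS_edge_third i k).
Qed.

Lemma tS_square_metric : is_square_metric (trel X) (tdist X) (tS X).
Proof.
  split; [|split; [|split; [|split]]].
  - split; [|split; [|split; [|split]]].
    + apply tdist_compat.
    + apply tdist_ge0.
    + intros a b. split; [apply tdist_eq0 | apply tdist_trel].
    + apply tdist_sym.
    + apply tdist_triangle.
  - apply tdist_le2.
  - apply tS_inj.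
  - apply tdist_tS_edge.
  - intros r s t u Hp Hq. apply Rle_ge, (l1_le_tdist_tS (r, s) (t, u)); auto.
Qed.

End TensorSquare.

(** * Functoriality *)

Section Functoriality.
Variables X Y : SqMS.
Variable f : car X -> car Y.
Hypothesis Hf : is_morphism X Y f.

Lemma tmap_trel a b : trel X a b -> trel Y (tmap f a) (tmap f b).
Proof.
  destruct Hf as [_ [_ HS]].
  induction 1 as [a b H | a | a b _ IH | a b c _ IH1 _ IH2].
  - destruct H as (m & n & p & q & Hp & Hq & Hmn & -> & -> & E1 & E2).
    unfold tmap; simpl. rewrite (HS p Hp), (HS q Hq).
    apply rst_step. exists m, n, p, q. tauto.
  - apply rst_refl.
  - now apply rst_sym.
  - now apply rst_trans with (tmap f b).
Qed.

Lemma step_cost_tmap a b : step_cost Y (tmap f a) (tmap f b) <= step_cost X a b.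
Proof.
  unfold step_cost at 2. destruct excluded_middle_informative as [Ht | Ht].
  - rewrite step_cost_trel by now apply tmap_trel. lra.
  - eapply Rle_trans; [apply step_cost_le_base|]. unfold base_d, tmap; simpl.
    destruct N_eq_dec; [|lra].
    destruct Hf as [_ [Hshort _]]. specialize (Hshort (snd a) (snd b)). lra.
Qed.

Lemma chain_cost_tmap a l : chain_cost Y (tmap f a) (map (tmap f) l) <= chain_cost X a l.
Proof.
  induction l as [|x l IH] in a |- *; simpl; [lra|].
  pose proof (step_cost_tmap a x). pose proof (IH x). lra.
Qed.

Lemma tdist_tmap a b : tdist Y (tmap f a) (tmap f b) <= tdist X a b.
Proof.
  apply tdist_ge. intros l <-. eapply Rle_trans; [|apply chain_cost_tmap].
  rewrite <- last_map. apply tdist_le_chain.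
Qed.

Lemma tmap_tS p : M0 p -> tmap f (tS X p) = tS Y p.
Proof.
  intros Hp. destruct Hf as [_ [_ HS]]. unfold tS, tmap; simpl.
  now rewrite HS by now apply rescale_cellN_M0.
Qed.

End Functoriality.

Theorem mainTheorem11 :
  (* objects: NN (x) X is a square metric space (quotient distance a metric,
     S well defined independently of the chosen cell) *)
  (forall X : SqMS,
     is_square_metric (trel X) (tdist X) (tS X) /\
     (forall (p : R * R) (n : NN), M0 p -> in_cell n p ->
        trel X (tS X p) (n, sqS X (rescale n p)))) /\
  (* morphisms are sent to morphisms *)
  (forall (X Y : SqMS) (f : car X -> car Y), is_morphism X Y f ->
     is_morphism_on (trel X) (trel Y) (tdist X) (tdist Y) (tS X) (tS Y)
       (tmap f)) /\
  (* identities preserved *)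
  (forall (X : SqMS) (a : TP X), trel X (tmap (fun x : car X => x) a) a) /\
  (* composition preserved *)
  (forall (X Y Z : SqMS) (f : car X -> car Y) (g : car Y -> car Z),
     is_morphism X Y f -> is_morphism Y Z g ->
     forall a : TP X, trel Z (tmap (fun x => g (f x)) a) (tmap g (tmap f a))).
Proof.
  split; [|split; [|split]].
  - intros X. split; [apply tS_square_metric | apply tS_cell_indep].
  - intros X Y f Hf. split; [|split].
    + now apply tmap_trel.
    + now apply tdist_tmap.
    + intros p Hp. rewrite tmap_tS by assumption. apply rst_refl.
  - intros X [n x]. apply rst_refl.
  - intros. apply rst_refl.
Qed.
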